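(* Let $t$ be a positive multiple of $12$ and let $n=t^2+1$. There exists a tree $T$ on $n$ vertices such that, for every (deterministic) strategy of the cat in the Cat and Mouse game on $T$, there is a sequence of mouse positions $(m_i)_{i\ge1}$ such that $\mathrm{rad}_T(M_i)>t/12$ for every $i$; that is, the mouse avoids being localised up to distance $t/12$ forever.
   Context: The Cat and Mouse game is played on a simple, undirected, connected graph $G$ in time steps $i=1,2,\dots$. The mouse occupies vertices $m_1,m_2,\dots$, where for $i\ge2$, $m_i$ equals $m_{i-1}$ or is a neighbour of $m_{i-1}$. At time $i$ the cat tests an arbitrary vertex $c_i$; for $i\ge2$ it is told $b_i=1$ if $d(c_i,m_i)\le d(c_{i-1},m_{i-1})$ and $b_i=0$ otherwise ($d$ = graph distance). A cat strategy is $(c_1,c_2,f)$ with $f:\bigcup_{i\in\mathbb N}\{0,1\}^i\to V(G)$ and $c_i=f(b_2,\dots,b_{i-1})$ for $i\ge3$; it is deterministic, fixed in advance, and known to the mouse (so the mouse's sequence may depend on it). $M_i$ is the set of vertices $v$ for which there exist $\tilde m_1,\dots,\tilde m_i$ with $\tilde m_i=v$, each $\tilde m_j$ in the closed neighbourhood of $\tilde m_{j-1}$, and for each $2\le j\le i$: $d(c_j,\tilde m_j)\le d(c_{j-1},\tilde m_{j-1})$ iff $b_j=1$. $\mathrm{rad}_G(W)=\min_{v\in V(G)}\max_{w\in W}d(v,w)$. *)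

From mathcomp Require Import all_boot.
Set Implicit Arguments. Unset Strict Implicit. Unset Printing Implicit Defensive.

Section Graphs.
Variable V : finType.
Variable e : rel V.

Definition simple_graph : Prop := irreflexive e /\ symmetric e.

Definition connected_graph : Prop := forall x y : V, connect e x y.

Definition acyclic_graph : Prop :=
  forall s : seq V, uniq s -> 2 < size s -> ~~ cycle e s.

Definition is_tree : Prop := simple_graph /\ connected_graph /\ acyclic_graph.

Fixpoint ball (k : nat) (x : V) : {set V} :=
  match k with
  | 0 => [set x]
  | k'.+1 => ball k' x :|: [set y | [exists z in ball k' x, e z y]]
  end.

(* graph distance: least k with y in ball k x (equal to #|V| if unreachable,
   which never happens in a connected graph) *)
Definition dist (x y : V) : nat := find (fun k => y \in ball k x) (iota 0 #|V|).

Definition rad (W : {set V}) : nat :=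
  \big[minn/#|V|]_(v : V) \max_(w in W) dist v w.

(* The Cat and Mouse game, 0-based: time i (paper) is index i-1 here.
   c1 c2 : first two tests, f : cat strategy, m : mouse positions.
   play k = ([b_2; ...; b_(k+1)], c_(k+1)). *)
Variables (c1 c2 : V) (f : seq bool -> V) (m : nat -> V).

Fixpoint play (k : nat) : seq bool * V :=
  match k with
  | 0 => ([::], c1)
  | k'.+1 =>
      let bs := (play k').1 in
      let cprev := (play k').2 in
      let ck := if k' is 0 then c2 else f bs in
      (rcons bs (dist ck (m k) <= dist cprev (m k')), ck)
  end.

(* cat k = c_(k+1);  bit k = b_(k+1)  (k >= 1) *)
Definition cat (k : nat) : V := (play k).2.
Definition bit (k : nat) : bool := last false (play k).1.

(* Mset k = M_(k+1) *)
Definition Mset (k : nat) : {set V} :=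
  [set v | [exists mt : {ffun 'I_k.+1 -> V},
     (mt ord_max == v) &&
     [forall j : 'I_k,
        ((mt (inord j.+1) == mt (inord j)) || e (mt (inord j)) (mt (inord j.+1)))
        && ((dist (cat j.+1) (mt (inord j.+1)) <= dist (cat j) (mt (inord j)))
            == bit j.+1)]]].

End Graphs.

From Pilot Require Import Defs.
From mathcomp Require Import all_boot zify.
Set Implicit Arguments. Unset Strict Implicit. Unset Printing Implicit Defensive.

(* The tree is a spider: a centre with [36 s] legs of length [4 s].  While the mouse is on a leg
   the cat does not test, its distance to the tested vertex is the sum of the two depths, so the
   answers only depend on the mouse's depth.  The mouse runs two depth tracks that always give the
   same answers, move by at most one per step, return to the centre within [8 s + 16] steps, and
   at least one of which is deeper than [s].  The cat being deterministic, the mouse knows in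
   advance which legs the cat tests during the next excursion of a track, and there are enough
   legs to run it on two untested legs.  So [M_k] contains two vertices deeper than [s] on
   different legs, and no vertex is within distance [s] of both. *)

Lemma acyclic_graph_of_parent_uniq (T : finType) (r : rel T) (d : T -> nat) :
  symmetric r -> (forall x y, r x y -> d x != d y) ->
  (forall x y z, r x y -> r x z -> d y < d x -> d z < d x -> y = z) ->
  acyclic_graph r.
Proof.
move=> r_sym r_d parent_uniq [//|a s] s_uniq s_size; apply/negP => s_cycle.
have [x xs x_max] := arg_maxnP d (mem_head a s).
have [i [|y [|z s']] rot_s] := rot_to xs.
- by move: s_size; rewrite -(size_rot i) rot_s.
- by move: s_size; rewrite -(size_rot i) rot_s.
move: s_uniq s_cycle; rewrite -(rot_uniq i) -(rot_cycle i) rot_s /=.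
case/and3P=> _ y_notin _; case/andP=> rxy; rewrite rcons_path => /and3P [_ _ rzx].
rewrite r_sym in rzx.
have lower w : w \in [:: x, y, z & s'] -> r x w -> d w < d x.
  move=> w_in rxw; rewrite ltn_neqAle eq_sym r_d //=.
  by apply: x_max; move: w_in; rewrite -rot_s mem_rot.
have y_last : y = last z s'.
  apply: parent_uniq rxy rzx (lower _ _ rxy) (lower _ _ rzx).
    by rewrite in_cons mem_head orbT.
  by apply/predU1r/predU1r/mem_last.
by move: y_notin; rewrite y_last mem_last.
Qed.

Definition fresh (T : finType) (x0 : T) (s : seq T) : T := odflt x0 [pick x | x \notin s].

Lemma fresh_notin (T : finType) (x0 : T) (s : seq T) : size s < #|T| -> fresh x0 s \notin s.
Proof.
rewrite /fresh; case: pickP => [x //|all_in] s_small.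
have : #|T| <= #|s| by apply/subset_leq_card/subsetP => x _; exact: negbFE (all_in x).
by rewrite leqNgt (leq_ltn_trans (card_size s) s_small).
Qed.

Lemma find_leq_iota d n : d < n -> find (fun k => d <= k) (iota 0 n) = d.
Proof.
move=> lt_dn; rewrite -(subnKC (ltnW lt_dn)) iotaD find_cat size_iota.
have -> : has (fun k => d <= k) (iota 0 d) = false.
  by apply/negbTE/hasPn => k; rewrite mem_iota; lia.
by case: (n - d) (subn_gt0 d n) lt_dn => [|k] /=; rewrite ?leqnn ?addn0 //; lia.
Qed.

Section Spider.
Variables N' L' : nat.
Local Notation N := N'.+1.
Local Notation L := L'.+1.

(* [None] is the centre and [Some (l, i)] the vertex at depth [i + 1] on leg [l]. *)
Definition spider := option ('I_N * 'I_L).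

Definition depth (p : spider) : nat := if p is Some (_, i) then i.+1 else 0.

Definition parent (p : spider) : spider :=
  if p is Some (l, Ordinal i.+1 _) then Some (l, inord i) else None.

Definition spider_adj (p q : spider) : bool :=
  match p, q with
  | None, None => false
  | None, Some (_, i) | Some (_, i), None => i == 0 :> nat
  | Some (l1, i1), Some (l2, i2) => (l1 == l2) && ((i1.+1 == i2) || (i2.+1 == i1))
  end.

Definition spider_dist (p q : spider) : nat :=
  match p, q with
  | Some (l1, i1), Some (l2, i2) =>
      if l1 == l2 then (i1 - i2) + (i2 - i1) else i1.+1 + i2.+1
  | _, _ => depth p + depth q
  end.

Lemma card_spider : #|{: spider}| = (N * L).+1.
Proof. by rewrite card_option card_prod !card_ord. Qed.

Lemma spider_adj_sym : symmetric spider_adj.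
Proof. by case=> [[l1 i1]|] [[l2 i2]|] //=; rewrite eq_sym orbC. Qed.

Lemma spider_adj_depth p q : spider_adj p q -> depth p != depth q.
Proof.
by case: p q => [[l1 i1]|] [[l2 i2]|] //= /andP[_ /orP[] /eqP <-]; lia.
Qed.

Lemma depth_parent p : depth (parent p) = (depth p).-1.
Proof. by case: p => [[l [[|i] lt_i]]|] //=; rewrite inordK //; lia. Qed.

Lemma spider_adj_parent p : 0 < depth p -> spider_adj p (parent p).
Proof. by case: p => [[l [[|i] lt_i]]|] //= _; rewrite eqxx inordK ?eqxx ?orbT //; lia. Qed.

Lemma spider_adj_lower p q : spider_adj p q -> depth q < depth p -> q = parent p.
Proof.
case: p q => [[l1 [i1 lt1]]|] [[l2 [i2 lt2]]|] //=; last by move/eqP->.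
case/andP=> /eqP <- /orP[] /eqP eq_i lt_d; first lia.
case: i1 lt1 eq_i {lt_d} => // i1 lt1 [eq_i]; subst i1.
by congr (Some (_, _)); apply/val_inj; rewrite /= inordK.
Qed.

Lemma spider_dist_eq0 p q : (spider_dist p q == 0) = (p == q).
Proof.
case: p q => [[l1 i1]|] [[l2 i2]|] //=.
apply/eqP/eqP => [|[-> ->]]; last by rewrite eqxx; lia.
by case: eqP => // -> eq_i; congr (Some (_, _)); apply: ord_inj; lia.
Qed.

Lemma spider_dist_le p q : spider_dist p q <= 2 * L.
Proof.
case: p q => [[l1 [i1 lt1]]|] [[l2 [i2 lt2]]|] /=; try lia.
by case: ifP; lia.
Qed.

Lemma spider_dist_adj x y z : spider_adj z y -> spider_dist x y <= (spider_dist x z).+1.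
Proof.
case: x y z => [[lx ix]|] [[ly iy]|] [[lz iz]|] //=.
- by case/andP=> /eqP <- /orP[] /eqP <-; case: ifP; lia.
- by move/eqP; case: ifP; lia.
- by move/eqP; case: ifP; lia.
- by case/andP=> _ /orP[] /eqP <-; lia.
- by move/eqP->.
Qed.

Lemma spider_dist_pred x y : 0 < spider_dist x y ->
  exists2 z, spider_adj z y & (spider_dist x z).+1 = spider_dist x y.
Proof.
case: y => [[ly [iy lty]]|]; last first.
  by case: x => [[lx ix]|] //= _; exists (Some (lx, ord0)); rewrite //= eqxx; lia.
set y := Some _.
have adj_parent : spider_adj (parent y) y by rewrite spider_adj_sym spider_adj_parent.
case: x => [[lx [ix ltx]]|] /=; last first.
  move=> _; exists (parent y) => //; rewrite /y /=.
  by case: iy {y adj_parent} lty => [|iy] lty //=; rewrite inordK //; lia.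
case: (eqVneq lx ly) => [->|ne_l] pos; last first.
  exists (parent y) => //; rewrite /y /=.
  by case: iy {y adj_parent} lty pos => [|iy] lty pos /=; rewrite ?(negbTE ne_l) ?inordK; lia.
case: (ltnP iy ix) => [lt_yx|le_xy].
  have lt_iy1 : iy.+1 < L := leq_ltn_trans lt_yx ltx.
  by exists (Some (ly, Ordinal lt_iy1)); rewrite /= !eqxx ?orbT //; lia.
exists (parent y) => //; rewrite /y /=.
by case: iy {y adj_parent} lty pos le_xy => [|iy] lty pos le_xy /=; rewrite ?eqxx ?inordK; lia.
Qed.

End Spider.

Section SpiderTree.
Variables (N' L' : nat) (V : finType) (g : V -> spider N' L') (gi : spider N' L' -> V).
Hypotheses (gK : cancel g gi) (giK : cancel gi g).
Local Notation N := N'.+1.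
Local Notation L := L'.+1.

Definition spider_rel : rel V := fun u v => spider_adj (g u) (g v).

Lemma ball_spider k x y : (y \in ball spider_rel k x) = (spider_dist (g x) (g y) <= k).
Proof.
elim: k y => [|k IHk] y /=.
  by rewrite in_set1 leqn0 spider_dist_eq0 (can_eq gK) eq_sym.
rewrite in_setU IHk in_set; apply/orP/idP => [[/leqW //|/existsP[z]]|le_dist].
  by rewrite IHk => /andP[le_z /(spider_dist_adj (g x))]; lia.
case: (leqP (spider_dist (g x) (g y)) k) => [|gt_k]; [by left | right].
have [|z adj_z dist_z] := @spider_dist_pred _ _ (g x) (g y); first lia.
by apply/existsP; exists (gi z); rewrite IHk /spider_rel giK adj_z andbT -ltnS dist_z.
Qed.

Lemma dist_spider x y : 1 < N -> dist spider_rel x y = spider_dist (g x) (g y).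
Proof.
move=> legs2; rewrite /dist (eq_find (a2 := fun k => spider_dist (g x) (g y) <= k)).
  apply: find_leq_iota; rewrite (bij_eq_card (Bijective gK giK)) card_spider.
  by have := spider_dist_le (g x) (g y); nia.
by move=> k; rewrite ball_spider.
Qed.

Lemma connect_centre x : connect spider_rel x (gi None).
Proof.
elim: {x}(depth (g x)) {-2}x (erefl (depth (g x))) => [|d IHd] x dx.
  by rewrite -(gK x); case: (g x) dx => [[l i]|] // _; apply: connect0.
have adj_x : spider_rel x (gi (parent (g x))) by rewrite /spider_rel giK spider_adj_parent ?dx.
apply: connect_trans (connect1 adj_x) (IHd _ _).
by rewrite giK depth_parent dx.
Qed.

Lemma spider_tree : is_tree spider_rel.
Proof.
have rel_sym : symmetric spider_rel by move=> u v; apply: spider_adj_sym.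
split; [split=> [u|//] | split].
- by apply/negbTE/negP => /spider_adj_depth; rewrite eqxx.
- move=> u v; apply: connect_trans (connect_centre u) _.
  by rewrite (sym_connect_sym rel_sym) connect_centre.
apply: (@acyclic_graph_of_parent_uniq _ _ (fun v => depth (g v)) rel_sym) => [u v|u v w].
  exact: spider_adj_depth.
move=> adj_v adj_w lt_v lt_w; apply: (can_inj gK).
by rewrite (spider_adj_lower adj_v lt_v) (spider_adj_lower adj_w lt_w).
Qed.

Definition leg_of (v : V) : option 'I_N := if g v is Some (l, _) then Some l else None.

Definition on_leg (l : 'I_N) (q : nat) : V :=
  if q is q'.+1 then gi (Some (l, inord q')) else gi None.

Lemma dist_on_leg c l q : 1 < N -> q <= L -> (q = 0 \/ leg_of c != Some l) ->
  dist spider_rel c (on_leg l q) = depth (g c) + q.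
Proof.
move=> legs2 le_qL off_leg; rewrite dist_spider // /on_leg /leg_of in off_leg *.
case: q le_qL off_leg => [_ _|q le_qL [//|]]; rewrite giK.
  by case: (g c) => [[lc ic]|].
case: (g c) => [[lc ic]|] //= ne_l; rewrite inordK //.
by case: ifP => // /eqP eq_l; rewrite eq_l eqxx in ne_l.
Qed.

Lemma on_leg_step l l' q q' : q <= L -> q' <= L -> q' <= q.+1 -> q <= q'.+1 ->
  (l = l' \/ q = 0 \/ q' = 0) ->
  on_leg l' q' = on_leg l q \/ spider_rel (on_leg l q) (on_leg l' q').
Proof.
rewrite /on_leg /spider_rel.
case: q q' => [|q] [|q'] //= le_q le_q' le_q'q le_qq' same_leg; try by left.
- by right; rewrite !giK /= inordK //; lia.
- by right; rewrite !giK /= inordK //; lia.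
case: same_leg => [<-|[]] //; case: (eqVneq q q') => [<-|ne_q]; first by left.
by right; rewrite !giK /= eqxx !inordK /=; lia.
Qed.

Lemma rad_gt_on_legs (W : {set V}) l1 l2 q1 q2 k : 1 < N -> q1 <= L -> q2 <= L ->
  on_leg l1 q1 \in W -> on_leg l2 q2 \in W -> l1 != l2 -> k < q1 -> k < q2 ->
  k < rad spider_rel W.
Proof.
move=> legs2 le_q1 le_q2 in_1 in_2 ne_l lt_k1 lt_k2.
apply: (big_ind (fun r => k < r)) => [|a b|v _].
- by rewrite (bij_eq_card (Bijective gK giK)) card_spider; nia.
- by rewrite leq_min => ->.
have far z : z \in W -> dist spider_rel v z <= \max_(w in W) dist spider_rel v w.
  exact: leq_bigmax_cond.
case: (eqVneq (leg_of v) (Some l1)) => [on_l1|off_l1].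
  have off_l2 : leg_of v != Some l2 by rewrite on_l1; apply: contra ne_l => /eqP[->].
  by have := far _ in_2; rewrite dist_on_leg //; [lia | right].
by have := far _ in_1; rewrite dist_on_leg //; [lia | right].
Qed.

End SpiderTree.

Section Tracks.
Variable s : nat.
Local Notation h := s.+1.

Definition excursion := 8 * h + 8.

(* The [active] one climbs to depth [h] while
   [rising] and then descends to the centre, the other one rests at depth [h] or [h + 1];
   [age_true] and [age_false] count the steps since each track last visited the centre. *)
Record tracks := Tracks {
  rising : bool; active : bool; act_depth : nat; rest_depth : nat;
  age_true : nat; age_false : nat }.

Definition track_depth (F : bool) (S : tracks) : nat :=
  if F == active S then act_depth S else rest_depth S.

Definition track_age (F : bool) (S : tracks) : nat := if F then age_true S else age_false S.

(* The answer for
   depth [q] is [a' + q' <= a + q]: equal moves of both tracks give equal answers, and the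
   active track may gain on the resting one when [a' != a] and fall behind when [a' != a.+1]. *)
Definition track_moves (a a' : nat) (S : tracks) : nat * nat :=
  let x := act_depth S in let y := rest_depth S in
  if rising S then
    if a' == a then (if h < y then (x, y.-1) else (x.+1, y.+1)) else (x.+1, y)
  else
    if a' == a.+1 then (if h < y then (x.-1, y.-1) else (x, y.+1)) else (x.-1, y).

Definition tracks_step (a a' : nat) (S : tracks) : tracks :=
  let: (x, y) := track_moves a a' S in
  let age F q := if q == 0 then 0 else (track_age F S).+1 in
  let ageA := age true (if active S then x else y) in
  let ageB := age false (if active S then y else x) in
  if rising S then
    if x == h then Tracks false (~~ active S) y x ageA ageB
    else Tracks true (active S) x y ageA ageB
  else Tracks (x == 0) (active S) x y ageA ageB.

(* An upper bound on the number of steps before track [F] is next at the centre: a climb takes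
   at most [2h + 1] steps and a descent at most [2h + 3], so it never exceeds [excursion]. *)
Definition return_time (F : bool) (S : tracks) : nat :=
  let climb := 2 * (h - act_depth S) + (rest_depth S - h) in
  let descent := 2 * act_depth S + (h.+1 - rest_depth S) in
  if rising S then
    if F == active S then climb + (2 * h + 3) * 2 + (2 * h + 1) else climb + (2 * h + 3)
  else
    if F == active S then descent else descent + (2 * h + 1) + (2 * h + 3).

Definition tracks_inv (S : tracks) : Prop :=
  [/\ h <= rest_depth S <= h.+1,
      (if rising S then act_depth S < h else 0 < act_depth S <= h.+1),
      age_true S + return_time true S <= excursion
    & age_false S + return_time false S <= excursion].

Lemma tracks_inv_init : tracks_inv (Tracks true true 0 h 0 0).
Proof. by rewrite /tracks_inv /return_time /excursion /=; split; lia. Qed.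

Lemma track_depth_step F a a' S :
  track_depth F (tracks_step a a' S) =
  if F == active S then (track_moves a a' S).1 else (track_moves a a' S).2.
Proof.
rewrite /tracks_step /track_depth; case: (track_moves a a' S) => x y /=.
by case: (rising S) (active S) F (x == h) => [] [] [] [].
Qed.

Lemma track_age_step F a a' S :
  track_age F (tracks_step a a' S) =
  if track_depth F (tracks_step a a' S) == 0 then 0 else (track_age F S).+1.
Proof.
rewrite track_depth_step /tracks_step /track_age; case: (track_moves a a' S) => x y /=.
by case: (rising S) (active S) F (x == h) => [] [] [] [].
Qed.

Lemma tracks_inv_step a a' S : tracks_inv S -> tracks_inv (tracks_step a a' S).
Proof.
case: S => [[] [] x y ta tb];
  rewrite /tracks_inv /tracks_step /track_moves /return_time /track_age /excursion /=;
  case=> /andP[y_ge y_le] x_bd age_t age_f;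
  case: (a' == a); case: (a' == a.+1); case: (ltnP h y) => /= ?;
  repeat (case: eqP => /= ?); split; lia.
Qed.

Lemma track_moves_answer a a' S : tracks_inv S ->
  (a' + (track_moves a a' S).1 <= a + act_depth S) =
  (a' + (track_moves a a' S).2 <= a + rest_depth S).
Proof.
case: S => [[] m x y ta tb];
  rewrite /tracks_inv /track_moves /= => -[/andP[y_ge y_le] x_bd _ _];
  case: eqP => ?; case: (ltnP h y) => /= ?; apply/idP/idP; lia.
Qed.

Lemma track_answer_indep F G a a' S : tracks_inv S ->
  (a' + track_depth F (tracks_step a a' S) <= a + track_depth F S) =
  (a' + track_depth G (tracks_step a a' S) <= a + track_depth G S).
Proof.
move=> /(track_moves_answer a a') same_answer; rewrite !track_depth_step /track_depth.
by case: F G (active S) => [] [] [].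
Qed.

Lemma track_depth_step_near F a a' S : tracks_inv S ->
  track_depth F (tracks_step a a' S) <= (track_depth F S).+1 /\
  track_depth F S <= (track_depth F (tracks_step a a' S)).+1.
Proof.
rewrite track_depth_step /track_depth.
case: S => [[] m x y ta tb];
  rewrite /tracks_inv /track_moves /= => -[/andP[y_ge y_le] x_bd _ _];
  case: (F == m); case: (a' == a); case: (a' == a.+1); case: (ltnP h y) => /= ?; lia.
Qed.

Lemma track_depth_le F S : tracks_inv S -> track_depth F S <= h.+1.
Proof.
case: S => [[] m x y ta tb];
  rewrite /tracks_inv /track_depth /= => -[/andP[y_ge y_le] x_bd _ _]; case: (F == m); lia.
Qed.

Lemma track_age_le F S : tracks_inv S -> track_age F S <= excursion.
Proof.
by case: S => [r m x y ta tb]; rewrite /tracks_inv /track_age /= => -[_ _]; case: F; lia.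
Qed.

Lemma rest_track_deep S : tracks_inv S -> h <= track_depth (~~ active S) S.
Proof. by case: S => [r [] x y ta tb] [/andP[y_ge _] _ _ _]. Qed.

End Tracks.

Section Game.
Variables (N' L' : nat) (V : finType) (g : V -> spider N' L') (gi : spider N' L' -> V).
Hypotheses (gK : cancel g gi) (giK : cancel gi g).
Variable s : nat.
Local Notation h := s.+1.
Local Notation N := N'.+1.
Local Notation L := L'.+1.
Hypotheses (deep_fits : h.+1 <= L) (enough_legs : excursion s + 3 <= N).
Variables (c1 c2 : V) (f : seq bool -> V).
Local Notation e := (spider_rel g).
Local Notation depth_of v := (depth (g v)).

Local Fact two_legs : 1 < N.
Proof. by move: enough_legs; rewrite /excursion; lia. Qed.

(* The play against a mouse whose depth follows track [true] on legs the cat does not test: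
   by [dist_on_leg] the answers, hence the cat's tests, only depend on depths. *)
Fixpoint sim_play (k : nat) : seq bool * V * tracks :=
  match k with
  | 0 => ([::], c1, Tracks true true 0 h 0 0)
  | k'.+1 =>
      let P := sim_play k' in
      let c' := if k' is 0 then c2 else f P.1.1 in
      let S' := tracks_step s (depth_of P.1.2) (depth_of c') P.2 in
      (rcons P.1.1 (depth_of c' + track_depth true S' <= depth_of P.1.2 + track_depth true P.2),
       c', S')
  end.

Definition sim_bits k := (sim_play k).1.1.
Definition sim_cat k := (sim_play k).1.2.
Definition sim_tracks k := (sim_play k).2.

Local Notation cat_depth j := (depth_of (sim_cat j)).
Local Notation depth_at F j := (track_depth F (sim_tracks j)).
Local Notation age_at F j := (track_age F (sim_tracks j)).
Local Notation start F j := (j - age_at F j).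

Lemma sim_catS k : sim_cat k.+1 = if k is 0 then c2 else f (sim_bits k).
Proof. by []. Qed.

Lemma sim_tracksS k :
  sim_tracks k.+1 = tracks_step s (cat_depth k) (cat_depth k.+1) (sim_tracks k).
Proof. by []. Qed.

Lemma sim_bitsS k : sim_bits k.+1 =
  rcons (sim_bits k) (cat_depth k.+1 + depth_at true k.+1 <= cat_depth k + depth_at true k).
Proof. by []. Qed.

Lemma sim_tracks_inv k : tracks_inv s (sim_tracks k).
Proof.
elim: k => [|k IHk]; first exact: tracks_inv_init.
by rewrite sim_tracksS; apply: tracks_inv_step.
Qed.

Lemma age_atS F k : age_at F k.+1 = if depth_at F k.+1 == 0 then 0 else (age_at F k).+1.
Proof. by rewrite sim_tracksS track_age_step. Qed.

Lemma age_at_le F k : age_at F k <= k.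
Proof. by elim: k => [|k IHk]; [case: F | rewrite age_atS; case: eqP]. Qed.

Lemma age_at_le_excursion F k : age_at F k <= excursion s.
Proof. exact/track_age_le/sim_tracks_inv. Qed.

Lemma depth_at_le F k : depth_at F k <= L.
Proof. exact/(leq_trans _ deep_fits)/track_depth_le/sim_tracks_inv. Qed.

Lemma depth_at_near F k :
  depth_at F k.+1 <= (depth_at F k).+1 /\ depth_at F k <= (depth_at F k.+1).+1.
Proof. by rewrite sim_tracksS; apply/track_depth_step_near/sim_tracks_inv. Qed.

Lemma age_at_sub F k d : d <= age_at F k -> age_at F (k - d) = age_at F k - d.
Proof.
elim: d => [|d IHd] le_d; first by rewrite !subn0.
have := IHd (ltnW le_d); have := age_at_le F k.
have -> : k - d = (k - d.+1).+1 by have := age_at_le F k; lia.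
by rewrite age_atS; case: eqP => _; lia.
Qed.

Lemma depth_at_start F k : 0 < start F k -> depth_at F (start F k) = 0.
Proof.
have : age_at F (start F k) = 0 by rewrite age_at_sub // subnn.
by case: (start F k) => // j; rewrite age_atS; case: eqP.
Qed.

Definition cat_legs p := pmap (fun j => leg_of g (sim_cat j)) (iota p (excursion s).+1).

Lemma cat_leg_notin p j l :
  p <= j <= p + excursion s -> l \notin cat_legs p -> leg_of g (sim_cat j) != Some l.
Proof.
move=> j_in; apply: contra => /eqP leg_j; rewrite mem_pmap -leg_j.
by apply: (map_f (fun i => leg_of g (sim_cat i))); rewrite mem_iota; lia.
Qed.

Definition main_leg p : 'I_N := fresh ord0 (cat_legs p).
Definition twin_leg p : 'I_N := fresh ord0 (main_leg p :: cat_legs p).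

Lemma size_cat_legs p : size (cat_legs p) <= (excursion s).+1.
Proof. by rewrite size_pmap -[X in _ <= X](size_iota p) count_size. Qed.

Lemma main_leg_notin p : main_leg p \notin cat_legs p.
Proof.
by apply: fresh_notin; rewrite card_ord; apply: leq_ltn_trans (size_cat_legs p) _; lia.
Qed.

Lemma twin_leg_notin p : twin_leg p != main_leg p /\ twin_leg p \notin cat_legs p.
Proof.
apply/andP; rewrite -negb_or -in_cons; apply: fresh_notin.
by rewrite card_ord /= ltnS; apply: leq_ltn_trans (size_cat_legs p) _; lia.
Qed.

Definition track_walk F j := on_leg gi (main_leg (start F j)) (depth_at F j).

Lemma dist_track_walk F j : dist e (sim_cat j) (track_walk F j) = cat_depth j + depth_at F j.
Proof.
apply: (dist_on_leg gK giK two_legs (depth_at_le F j)); right.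
apply: cat_leg_notin (main_leg_notin _).
by have := age_at_le F j; have := age_at_le_excursion F j; lia.
Qed.

Lemma track_walk_step F j :
  track_walk F j.+1 = track_walk F j \/ e (track_walk F j) (track_walk F j.+1).
Proof.
have [near1 near2] := depth_at_near F j.
apply: (on_leg_step giK (depth_at_le F j) (depth_at_le F j.+1) near1 near2).
by rewrite age_atS; case: eqP => [->|_]; [right; right | left; rewrite subSS].
Qed.

Definition mouse := track_walk true.

Lemma play_mouse k : play e c1 c2 f mouse k = (sim_bits k, sim_cat k).
Proof. by elim: k => [|k /= ->] //; rewrite -sim_catS sim_bitsS /mouse !dist_track_walk. Qed.

Lemma mem_Mset_walk F k (w : nat -> V) :
  (forall j, j < k -> w j.+1 = w j \/ e (w j) (w j.+1)) ->
  (forall j, j <= k -> dist e (sim_cat j) (w j) = cat_depth j + depth_at F j) ->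
  w k \in Mset e c1 c2 f mouse k.
Proof.
move=> w_step w_dist; rewrite inE; apply/existsP; exists [ffun i : 'I_k.+1 => w i].
rewrite ffunE eqxx /=; apply/forallP => j; have lt_jk : j < k := ltn_ord j.
rewrite !ffunE (inordK (ltnW lt_jk : j < k.+1)) (inordK (lt_jk : j.+1 < k.+1)).
apply/andP; split; first by case: (w_step j lt_jk) => ->; rewrite ?eqxx ?orbT.
rewrite /Defs.cat /Defs.bit !play_mouse /= sim_bitsS last_rcons.
rewrite (w_dist j.+1 lt_jk) (w_dist j (ltnW lt_jk)).
by rewrite sim_tracksS (track_answer_indep _ true) //; apply: sim_tracks_inv.
Qed.

Definition twin_walk F k j :=
  if start F k <= j then on_leg gi (twin_leg (start F k)) (depth_at F j) else track_walk F j.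

Lemma twin_walk_step F k j : j < k ->
  twin_walk F k j.+1 = twin_walk F k j \/ e (twin_walk F k j) (twin_walk F k j.+1).
Proof.
move=> lt_jk; rewrite /twin_walk; set p := start F k.
have [near1 near2] := depth_at_near F j.
have leg_step := on_leg_step giK (depth_at_le F j) (depth_at_le F j.+1) near1 near2.
case: (ltngtP p j.+1) => [|lt_j1p|eq_p].
- by rewrite ltnS => ->; apply: leg_step; left.
- by rewrite leqNgt ltnW //; apply: track_walk_step.
have depth0 : depth_at F j.+1 = 0 by rewrite -eq_p; apply: depth_at_start; rewrite -/p eq_p.
by rewrite eq_p ltnn; apply: leg_step; right; right.
Qed.

Lemma dist_twin_walk F k j : j <= k ->
  dist e (sim_cat j) (twin_walk F k j) = cat_depth j + depth_at F j.
Proof.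
move=> le_jk; rewrite /twin_walk; case: leqP => [le_pj|_]; last exact: dist_track_walk.
apply: (dist_on_leg gK giK two_legs (depth_at_le F j)); right.
apply: cat_leg_notin (proj2 (twin_leg_notin _)).
by have := age_at_le F k; have := age_at_le_excursion F k; lia.
Qed.

Lemma rad_Mset_mouse k : s < rad e (Mset e c1 c2 f mouse k).
Proof.
set D := ~~ active (sim_tracks k).
have deep : h <= depth_at D k := rest_track_deep (sim_tracks_inv k).
have walk_in : track_walk D k \in Mset e c1 c2 f mouse k.
  by apply: (@mem_Mset_walk D) => j _; [apply: track_walk_step | apply: dist_track_walk].
have twin_in : twin_walk D k k \in Mset e c1 c2 f mouse k.
  by apply: (@mem_Mset_walk D) => j; [apply: twin_walk_step | apply: dist_twin_walk].
rewrite /twin_walk leq_subr in twin_in.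
apply: (rad_gt_on_legs gK giK two_legs _ _ walk_in twin_in) => //; try exact: depth_at_le.
by rewrite eq_sym; case: (twin_leg_notin (start D k)).
Qed.

Lemma mouse_step k : mouse k.+1 = mouse k \/ e (mouse k) (mouse k.+1).
Proof. exact: track_walk_step. Qed.

End Game.

Theorem proposition3p1 (s : nat) : 0 < s ->
  let t := 12 * s in
  let n := t ^ 2 + 1 in
  exists e : rel 'I_n,
    is_tree e /\
    forall (c1 c2 : 'I_n) (f : seq bool -> 'I_n),
      exists m : nat -> 'I_n,
        (forall k, m k.+1 = m k \/ e (m k) (m k.+1)) /\
        (forall k, t %/ 12 < rad e (Mset e c1 c2 f m k)).
Proof.
move=> s_gt0 t n; rewrite [t %/ 12]mulKn //.
pose N' := 36 * s - 1; pose L' := 4 * s - 1.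
have card_n : #|{: spider N' L'}| = n by rewrite card_spider /n /t /N' /L'; nia.
pose g (v : 'I_n) : spider N' L' := enum_val (cast_ord (esym card_n) v).
pose gi (p : spider N' L') : 'I_n := cast_ord card_n (enum_rank p).
have gK : cancel g gi by move=> v; rewrite /g /gi enum_valK cast_ordKV.
have giK : cancel gi g by move=> p; rewrite /g /gi cast_ordK enum_rankK.
have deep_fits : s.+2 <= L'.+1 by rewrite /L'; lia.
have enough_legs : excursion s + 3 <= N'.+1 by rewrite /excursion /N'; lia.
exists (spider_rel g); split; first exact: spider_tree gK giK.
move=> c1 c2 f; exists (mouse g gi s c1 c2 f); split => k.
  exact (mouse_step giK deep_fits c1 c2 f k).
exact (rad_Mset_mouse gK giK deep_fits enough_legs c1 c2 f k).
Qed.
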